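(* Let $\llbracket\mu\rrbracket$ be a FastPai encryption of $\mu\in\mathbb{Z}_N$ (e.g. the output of the secure comparison protocol), and let $\langle 2\alpha\rangle_0,\langle 2\alpha\rangle_1$ be integers held by $S_0$, $S_1$ respectively with $\langle 2\alpha\rangle_1-\langle 2\alpha\rangle_0=2\alpha$. Run protocol $\mathtt{C2S}$: $S_0$ sends $\llbracket\mu\rrbracket$ to $S_1$, and for $i\in\{0,1\}$, $S_i$ computes $\langle 2\alpha\mu\rangle_i=\mathrm{DDLog}_N(\llbracket\mu\rrbracket^{\langle 2\alpha\rangle_i}\bmod N^2)$. Then $\langle 2\alpha\mu\rangle_1-\langle 2\alpha\mu\rangle_0\equiv 2\alpha\cdot\mu\pmod N$.
   Context: FastPai: for a security parameter $\kappa$, $l(\kappa)=4\kappa$. $N=PQ$ with $P,Q$ primes of $n(\kappa)/2$ bits, $p,q$ odd primes of $l(\kappa)/2$ bits, $p\mid P-1$, $q\mid Q-1$, $P\equiv Q\equiv3\pmod4$, $\gcd(P-1,Q-1)=2$, $\gcd(pq,(P-1)(Q-1)/(4pq))=1$. Private key $\alpha=pq$; $\beta=(P-1)(Q-1)/(4pq)$; $h=-y_0^{2\beta}\bmod N$ for random $y_0\in\mathbb{Z}_N^*$; public key $(N,h)$. $\mathrm{Enc}(m)=(1+N)^m(h^r\bmod N)^N\bmod N^2$, $r$ uniform in $\{0,1\}^{l(\kappa)}$, written $\llbracket m\rrbracket$. Ciphertext exponentiations by (possibly negative) integers are in $\mathbb{Z}_{N^2}^*$. $\mathrm{DDLog}_N(g)=\lfloor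 g/N\rfloor\cdot(g\bmod N)^{-1}\bmod N$ for $g\in[0,N^2)$ with $g\bmod N$ invertible mod $N$. *)

From mathcomp Require Import all_boot all_algebra.
Set Implicit Arguments. Unset Strict Implicit. Unset Printing Implicit Defensive.
Import GRing.Theory.
Local Open Scope ring_scope.

Definition has_bits (b x : nat) : bool := (2 ^ b.-1 <= x < 2 ^ b)%N.

Definition fp_beta (P Q p q : nat) : nat := (((P - 1) * (Q - 1)) %/ (4 * p * q))%N.

Definition fp_h (N y0 beta : nat) : nat := ((N - (y0 ^ (2 * beta)) %% N) %% N)%N.

Definition fp_enc (N h m r : nat) : 'Z_(N ^ 2) :=
  (1 + (N%:R : 'Z_(N ^ 2))) ^+ m * (((h ^ r) %% N)%N%:R : 'Z_(N ^ 2)) ^+ N.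

Definition DDLog (N g : nat) : nat :=
  nat_of_ord (((g %/ N)%N%:R * (((g %% N)%N%:R : 'Z_N)^-1)) : 'Z_N).

From mathcomp Require Import all_boot all_algebra cyclic.
From mathcomp Require Import zify ring.
Import GRing.Theory.
Local Open Scope ring_scope.

(* Write alpha = pq. Since h = -y0^(2 beta) mod N and 4 alpha beta = (P-1)(Q-1) is the
   totient of N, Euler's theorem gives h^(2 alpha) = 1 mod N, hence
   (h^r mod N)^(2 alpha) = 1 + jN for some j. Its N-th power is 1 in Z_(N^2) because
   (jN)^2 = 0 there, so c^(2 alpha) = (1 + N)^(2 alpha mu) = 1 + 2 alpha mu N.
   Thus c^(s1) = c^(s0) (1 + 2 alpha mu N), and multiplying a unit A of Z_(N^2) by 1 + XN
   keeps A mod N and adds AX to floor(A/N) mod N: DDLog is shifted by exactly X. *)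

Lemma expr1D_sqr0 (R : pzRingType) (y : R) m : y * y = 0 -> (1 + y) ^+ m = 1 + y *+ m.
Proof.
move=> yy; elim: m => [|m IH]; first by rewrite expr0 mulr0n addr0.
rewrite exprS IH mulrDl mul1r mulrDr mulr1 mulrnAr yy mul0rn addr0 mulrS.
by rewrite [y + _]addrC addrA.
Qed.

Lemma modz_natmodD_subl (N D X : nat) :
  ((((D + X) %% N)%N)%:Z - D%:Z = X%:Z %[mod N%:Z])%Z.
Proof. by rewrite -modz_nat modzDml PoszD addrC addKr. Qed.

Lemma dvdn_double_subn1 (p P : nat) : odd p -> odd P -> (p %| P - 1)%N -> (2 * p %| P - 1)%N.
Proof.
move=> op oP pP1; rewrite Gauss_dvd ?coprime2n // pP1 andbT dvdn2.
by rewrite oddB ?oP // odd_gt0.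
Qed.

Lemma totient_mul_primes (P Q : nat) : prime P -> prime Q -> P != Q ->
  totient (P * Q) = ((P - 1) * (Q - 1))%N.
Proof.
move=> pP pQ PQ.
by rewrite totient_coprime ?prime_coprime ?dvdn_prime2 // !totient_prime // !subn1.
Qed.

Lemma Zp_natr_eq (M a b : nat) : (1 < M)%N -> ((a%:R : 'Z_M) = b%:R) <-> (a = b %[mod M])%N.
Proof.
move=> M1; split => [E|E].
  by move: (congr1 val E); rewrite /= !val_Zp_nat.
by apply: val_inj; rewrite /= !val_Zp_nat.
Qed.

Lemma val_Zp_mul_natr (M n : nat) (x : 'Z_M) : (1 < M)%N ->
  val (x * n%:R) = ((val x * n) %% M)%N.
Proof. by move=> M1; rewrite -[x in LHS]natr_Zp -natrM; apply: val_Zp_nat. Qed.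

Lemma natr_mulnn_Zp_sqr (N : nat) : (1 < N)%N -> (N%:R : 'Z_(N ^ 2)) * N%:R = 0.
Proof.
move=> N1; rewrite -natrM mulnn.
by apply/(Zp_natr_eq _ _ 0 (ltnW (ltn_expl 2 N1))); rewrite modnn mod0n.
Qed.

Lemma Zp_sqr_exprMN_eq1 (N e k : nat) : (1 < N)%N -> (e ^ k = 1 %[mod N])%N ->
  (e%:R : 'Z_(N ^ 2)) ^+ (k * N) = 1.
Proof.
move=> N1 ek1.
have nn := natr_mulnn_Zp_sqr _ N1.
have ekE : (e ^ k = 1 + e ^ k %/ N * N)%N by rewrite {1}(divn_eq (e ^ k) N) ek1 modn_small // addnC.
rewrite exprM -natrX ekE natrD natrM expr1D_sqr0; last first.
  by rewrite mulrACA nn mulr0.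
by rewrite -mulrnAr -[N%:R *+ N]mulr_natr nn mulr0 addr0.
Qed.

Lemma Zp_sqr_unit_1addMN (N x : nat) : (1 < N)%N ->
  ((1 + x * N)%N%:R : 'Z_(N ^ 2)) \is a GRing.unit.
Proof.
move=> N1; rewrite unitZpE ?(ltnW (ltn_expl 2 N1)) //.
by rewrite coprime_pexpl // -coprime_modr addnC modnMDl coprime_modr coprimen1.
Qed.

Lemma fp_h_exp2M (N y b k : nat) : (1 < N)%N ->
  (fp_h N y b ^ (2 * k) = y ^ (4 * b * k) %[mod N])%N.
Proof.
move=> N1; apply/(Zp_natr_eq _ _ _ N1).
have hE : (fp_h N y b)%:R = - (y%:R ^+ (2 * b)) :> 'Z_N.
  rewrite /fp_h Zp_nat_mod // natrB; last by rewrite ltnW // ltn_pmod // ltnW.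
  by rewrite Zp_nat_mod // natrX -[N%:R](Zp_nat_mod N1) modnn sub0r.
by rewrite !natrX hE exprM sqrrN -!exprM; congr (_ ^+ _); ring.
Qed.

Lemma fp_betaK (P Q p q : nat) : (2 * p %| P - 1)%N -> (2 * q %| Q - 1)%N ->
  (fp_beta P Q p q * (4 * p * q) = (P - 1) * (Q - 1))%N.
Proof.
move=> pP1 qQ1; rewrite /fp_beta divnK //.
by rewrite (_ : 4 * p * q = (2 * p) * (2 * q))%N ?dvdn_mul //; ring.
Qed.

Lemma fp_enc_expr (N h m r k : nat) : (1 < N)%N -> (h ^ k = 1 %[mod N])%N ->
  fp_enc N h m r ^+ k = (1 + k * m * N)%N%:R.
Proof.
move=> N1 hk1; rewrite /fp_enc exprMn -!exprM [(N * k)%N]mulnC Zp_sqr_exprMN_eq1 //.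
  rewrite mulr1 expr1D_sqr0 ?natr_mulnn_Zp_sqr // natrD.
  by rewrite -[N%:R *+ _]mulr_natr -natrM mulnC [(m * k)%N]mulnC.
by rewrite modnXm -expnM mulnC expnM -modnXm hk1 modnXm exp1n.
Qed.

Lemma DDLog_mul_1addMN (N A X : nat) : (1 < N)%N -> coprime A N ->
  DDLog N ((A * (1 + X * N)) %% N ^ 2)%N = ((DDLog N A + X) %% N)%N.
Proof.
move=> N1 cAN.
have dN : (N %| N ^ 2)%N by rewrite expnS dvdn_mulr.
have AXE : (A * (1 + X * N) = A * X * N + A)%N by ring.
have modE : ((A * (1 + X * N)) %% N ^ 2 %% N = A %% N)%N by rewrite modn_dvdm // AXE modnMDl.
have divE : ((A * (1 + X * N)) %% N ^ 2 %/ N = (A %/ N + A * X) %% N)%N.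
  by rewrite divn_modl // AXE divnMDl ?(ltnW N1) // addnC expnS expn1 mulnK // ltnW.
have Au : (A%:R : 'Z_N) \is a GRing.unit by rewrite unitZpE // coprime_sym.
rewrite /DDLog modE divE !Zp_nat_mod // natrD natrM mulrDl [_ * X%:R]mulrC -mulrA.
by rewrite mulrV // mulr1 -[X in X + _]natr_Zp -natrD val_Zp_nat.
Qed.

Lemma DDLog_Zp_mul_1addMN (N X : nat) (x : 'Z_(N ^ 2)) : (1 < N)%N ->
  x \is a GRing.unit ->
  DDLog N (val (x * (1 + X * N)%N%:R)) = ((DDLog N (val x) + X) %% N)%N.
Proof.
move=> N1 xu; have N2 := ltnW (ltn_expl 2 N1).
rewrite val_Zp_mul_natr // DDLog_mul_1addMN //.
by rewrite coprime_sym -(@coprime_pexpl 2) // -unitZpE // natr_Zp.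
Qed.

Theorem theorem4 (kappa : nat) (nlen : nat -> nat) (P Q p q y0 mu r : nat)
    (s0 s1 : int) :
  prime P -> prime Q -> prime p -> prime q -> odd p -> odd q ->
  has_bits (nlen kappa)./2 P -> has_bits (nlen kappa)./2 Q ->
  has_bits (4 * kappa)./2 p -> has_bits (4 * kappa)./2 q ->
  (p %| P - 1)%N -> (q %| Q - 1)%N ->
  (P %% 4 = 3)%N -> (Q %% 4 = 3)%N ->
  gcdn (P - 1) (Q - 1) = 2%N ->
  coprime (p * q) (fp_beta P Q p q) ->
  (y0 < P * Q)%N -> coprime y0 (P * Q) ->
  (mu < P * Q)%N -> (r < 2 ^ (4 * kappa))%N ->
  s1 - s0 = (2 * (p * q))%N%:Z ->
  let N := (P * Q)%N in
  let h := fp_h N y0 (fp_beta P Q p q) in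
  let c := fp_enc N h mu r in
  ((DDLog N (val (c ^ s1)))%:Z - (DDLog N (val (c ^ s0)))%:Z
     = (2 * (p * q) * mu)%N%:Z %[mod N%:Z])%Z.
Proof.
move=> pP pQ pp pq op oq _ _ _ _ pP1 qQ1 P4 Q4 gPQ _ _ cyN _ _ s10 N h c.
have N1 : (1 < N)%N by rewrite /N; have := prime_gt1 pP; have := prime_gt1 pQ; nia.
have [oP oQ] : odd P /\ odd Q by split; lia.
have PQ : P != Q.
  apply/eqP => ePQ; move: gPQ pP1; rewrite ePQ gcdnn => ->.
  by rewrite dvdn_prime2 // => /eqP p2; rewrite p2 in op.
have h1 : (h ^ (2 * (p * q)) = 1 %[mod N])%N.
  rewrite fp_h_exp2M // (_ : 4 * _ * _ = fp_beta P Q p q * (4 * p * q))%N; last by ring.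
  rewrite fp_betaK ?dvdn_double_subn1 // -totient_mul_primes //.
  exact: Euler_exp_totient.
have c2 : c ^+ (2 * (p * q)) = (1 + 2 * (p * q) * mu * N)%N%:R by apply: fp_enc_expr.
have cu : c \is a GRing.unit.
  rewrite -(unitrX_pos c (_ : 0 < 2 * (p * q))%N) ?c2 ?Zp_sqr_unit_1addMN //.
  by rewrite !muln_gt0 !prime_gt0.
rewrite (_ : s1 = s0 + (2 * (p * q))%N%:Z); last by rewrite -s10 addrC subrK.
by rewrite exprzDr // -exprnP c2 DDLog_Zp_mul_1addMN ?unitrXz // modz_natmodD_subl.
Qed.
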